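(* Let $p$ be any prime, let $m,k$ be positive integers, let $q=p^m$, and let $U_{q+1}=\{x\in\mathbb{F}_{q^2}: x^{q+1}=1\}$. Then for any $a,b\in\mathbb{F}_{q^2}$ with $(a,b)\neq(0,0)$, the number of solutions $x\in U_{q+1}$ of the equation \[ b x^{p^k+1}+a x^{p^k}+a^{q}x+b^{q}=0 \] is one of $0$, $1$, $2$, or $p^{\gcd(k,m)}+1$. *)

(* F_{q^2} is modelled as an arbitrary finite field F with
   #|F| = q^2, q = p^m (unique up to isomorphism). *)
From mathcomp Require Import all_boot all_order all_algebra all_field.
Set Implicit Arguments. Unset Strict Implicit. Unset Printing Implicit Defensive.
Import GRing.Theory.
Local Open Scope ring_scope.

Definition unit_circle (F : finFieldType) (q : nat) : {set F} :=
  [set x : F | x ^+ (q + 1) == 1].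

Definition sol_set (F : finFieldType) (p k q : nat) (a b : F) : {set F} :=
  [set x in unit_circle F q |
     b * x ^+ (p ^ k + 1) + a * x ^+ (p ^ k) + a ^+ q * x + b ^+ q == 0].

From mathcomp Require Import all_boot all_order all_algebra all_field all_solvable.
From mathcomp Require Import ring.
Set Implicit Arguments. Unset Strict Implicit. Unset Printing Implicit Defensive.
Import GRing.Theory.
Local Open Scope ring_scope.

(* If the equation has a root x0 on U_{q+1}, the substitution x = x0 + 1/z turns both
   x^{q+1} = 1 and the equation itself into affine equations c z^{p^n} + c' z + c'' = 0.
   As z |-> z^{p^n} is additive, two distinct common solutions z1, z2 force the common
   solution set to be z1 + (z2 - z1) F_{p^d} with d = gcd(k, m), and F_{p^d} is a
   subfield of F_{q^2}; the extra root x0 accounts for the "+1". *)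

Definition frob_lin (F : pzRingType) (c1 c2 : F) (Q : nat) (z : F) :=
  c1 * z ^+ Q + c2 * z.

Definition frob_quad (F : pzRingType) (b a c d : F) (Q : nat) (x : F) :=
  b * x ^+ (Q + 1) + a * x ^+ Q + c * x + d.

Section FrobeniusForms.

Variables (F : fieldType) (Q : nat).

Lemma frob_lin_kernelM (c1 c2 w s : F) :
  c2 != 0 -> w != 0 -> frob_lin c1 c2 Q w = 0 ->
  (frob_lin c1 c2 Q (w * s) == 0) = (s ^+ Q == s).
Proof.
rewrite /frob_lin => c2_neq0 w_neq0 /eqP; rewrite addr_eq0 => /eqP w_ker.
have -> : c1 * (w * s) ^+ Q + c2 * (w * s) = c2 * w * (s - s ^+ Q).
  by rewrite exprMn (mulrA c1) w_ker; ring.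
by rewrite !mulf_eq0 (negbTE c2_neq0) (negbTE w_neq0) subr_eq0 eq_sym.
Qed.

Lemma frob_quad_recip (b a c y z : F) : y * z = 1 ->
  frob_quad b a c 0 Q y * z ^+ (Q + 1) = frob_lin c a Q z + b.
Proof.
move=> yz1; have yzQ : y ^+ Q * z ^+ Q = 1 by rewrite -exprMn yz1 expr1n.
rewrite /frob_quad /frob_lin addn1 !exprSr.
transitivity (b * (y ^+ Q * z ^+ Q) * (y * z) + a * (y ^+ Q * z ^+ Q) * z
              + c * z ^+ Q * (y * z)); first by ring.
by rewrite yzQ yz1; ring.
Qed.

Hypothesis charFQ : [pchar F].-nat Q.

Lemma frob_linD (c1 c2 x y : F) :
  frob_lin c1 c2 Q (x + y) = frob_lin c1 c2 Q x + frob_lin c1 c2 Q y.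
Proof. by rewrite /frob_lin exprDn_pchar //; ring. Qed.

Lemma frob_quad_shift (b a c d x0 y : F) :
  frob_quad b a c d Q (x0 + y) =
  frob_quad b a c d Q x0 + frob_quad b (b * x0 + a) (b * x0 ^+ Q + c) 0 Q y.
Proof. by rewrite /frob_quad !addn1 !exprSr exprDn_pchar //; ring. Qed.

Lemma frob_quad_shiftV (b a c d x0 z : F) :
  frob_quad b a c d Q x0 = 0 -> z != 0 ->
  (frob_quad b a c d Q (x0 + z^-1) == 0) =
  (frob_lin (b * x0 ^+ Q + c) (b * x0 + a) Q z + b == 0).
Proof.
move=> root_x0 z_neq0; rewrite frob_quad_shift root_x0 add0r.
rewrite -(frob_quad_recip _ _ _ (mulVf z_neq0)) mulf_eq0 expf_eq0.
by rewrite (negbTE z_neq0) andbF orbF.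
Qed.

End FrobeniusForms.

Section FrobeniusFixed.

Variables (R : pzRingType) (p : nat).

Lemma fixed_exprM (d j : nat) (s : R) :
  s ^+ (p ^ d) = s -> s ^+ (p ^ (d * j)) = s.
Proof.
move=> fix_s; elim: j => [|j IHj]; first by rewrite muln0 expn0 expr1.
by rewrite mulnS expnD exprM fix_s IHj.
Qed.

Lemma fixed_expr_dvd (d e : nat) (s : R) : (d %| e)%N ->
  s ^+ (p ^ d) = s -> s ^+ (p ^ e) = s.
Proof. by move=> /dvdnP[j ->] fix_s; rewrite mulnC fixed_exprM. Qed.

Lemma fixed_expr_gcd (k m : nat) (s : R) : (0 < k)%N ->
  s ^+ (p ^ k) = s -> s ^+ (p ^ m) = s -> s ^+ (p ^ gcdn k m) = s.
Proof.
move=> k_gt0 fix_k fix_m; have [u v Bezout _] := egcdnP m k_gt0.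
have := fixed_exprM u fix_k.
by rewrite mulnC Bezout expnD mulnC exprM -exprM mulnC exprM (mulnC v) fixed_exprM.
Qed.

End FrobeniusFixed.

Section FiniteField.

Variable F : finFieldType.

Lemma finField_prim_root : {g : F | #|F|.-1.-primitive_root g}.
Proof.
have /hasP/sig2_eqW[g _ prim_g] : has #|F|.-1.-primitive_root (enum [set~ (0 : F)]).
  apply: has_prim_root; rewrite ?enum_uniq -?cardE ?cardsC1 ?ltn_predRL ?finNzRing_gt1 //.
  apply/allP => x; rewrite mem_enum !inE => x_neq0; rewrite unity_rootE.
  by rewrite -(inj_eq (mulIf x_neq0)) -exprSr (ltn_predK (finNzRing_gt1 F)) expf_card mul1r.
by exists g.
Qed.

Lemma card_unity_roots (n : nat) : (0 < n)%N -> (n %| #|F|.-1)%N ->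
  #|[set s : F | s ^+ n == 1]| = n.
Proof.
move=> n_gt0 dvd_n; have [g prim_g] := finField_prim_root.
have prim_z := dvdn_prim_root prim_g dvd_n; set z := g ^+ _ in prim_z.
have -> : [set s : F | s ^+ n == 1] = [set z ^+ i | i : 'I_n].
  apply/setP => s; rewrite inE; apply/eqP/imsetP => [/(prim_rootP prim_z)[i ->]|[i _ ->]].
    by exists i.
  by rewrite -exprM mulnC exprM (prim_expr_order prim_z) expr1n.
rewrite card_imset ?card_ord // => i j /eqP.
by rewrite (eq_prim_root_expr prim_z) !modn_small // => /eqP/val_inj.
Qed.

Lemma card_frob_fixed (p e d : nat) : prime p -> #|F| = (p ^ e)%N ->
  (0 < d)%N -> (d %| e)%N -> #|[set s : F | s ^+ (p ^ d) == s]| = (p ^ d)%N.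
Proof.
move=> p_pr cardF d_gt0 /dvdnP[j e_dj].
have pd_gt1 : (1 < p ^ d)%N by rewrite -(exp1n d) ltn_exp2r ?prime_gt1.
rewrite -(ltn_predK pd_gt1).
have -> : [set s : F | s ^+ (p ^ d).-1.+1 == s] = 0 |: [set s | s ^+ (p ^ d).-1 == 1].
  apply/setP => s; rewrite !inE exprS.
  have [->|s_neq0] := eqVneq s 0; first by rewrite mul0r eqxx.
  by rewrite -[X in _ == X]mulr1 (inj_eq (mulfI s_neq0)).
rewrite cardsU1 card_unity_roots ?ltn_predRL //; last first.
  by rewrite cardF e_dj mulnC expnM dvdn_pred_predX.
by rewrite inE expr0n gtn_eqF ?ltn_predRL // eq_sym oner_eq0.
Qed.

End FiniteField.

Definition frob_lin_zeros (F : finFieldType) (c1 c2 c3 : F) (Q : nat) : {set F} :=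
  [set z | frob_lin c1 c2 Q z + c3 == 0].

Section CommonZeros.

Variables (F : finFieldType) (p : nat).
Hypothesis charFp : p \in [pchar F].

Let pchar_natX (n : nat) : [pchar F].-nat (p ^ n)%N.
Proof.
rewrite (eq_pnat _ (pcharf_eq charFp)) pnatX pnat_id //.
exact: pcharf_prime charFp.
Qed.

Lemma frob_lin_zeros_shift (c1 c2 c3 z1 y : F) (n : nat) :
  z1 \in frob_lin_zeros c1 c2 c3 (p ^ n) ->
  (z1 + y \in frob_lin_zeros c1 c2 c3 (p ^ n)) = (frob_lin c1 c2 (p ^ n) y == 0).
Proof.
move=> /[!inE] /eqP z1_zero.
by rewrite frob_linD // addrAC z1_zero add0r.
Qed.

Lemma frob_lin_zeros_const (c1 c3 z1 z2 : F) (n : nat) : z1 != z2 ->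
  z1 \in frob_lin_zeros c1 0 c3 (p ^ n) -> z2 \in frob_lin_zeros c1 0 c3 (p ^ n) ->
  c3 = 0.
Proof.
move=> z12 z1Z z2Z.
have /eqP : frob_lin c1 0 (p ^ n) (z2 - z1) = 0.
  by apply/eqP; rewrite -(frob_lin_zeros_shift _ z1Z) addrC subrK.
rewrite /frob_lin mul0r addr0 mulf_eq0 expf_eq0 subr_eq0 [z2 == z1]eq_sym.
rewrite (negbTE z12) andbF orbF.
by move: z1Z; rewrite inE /frob_lin => /eqP + /eqP c1_0; rewrite c1_0 !mul0r !add0r.
Qed.

Lemma card_frob_lin_common_zeros (c1 c2 c3 e1 e2 e3 z1 z2 : F) (n1 n2 : nat) :
  (0 < n1)%N -> c2 != 0 -> e2 != 0 -> z1 != z2 ->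
  z1 \in frob_lin_zeros c1 c2 c3 (p ^ n1) :&: frob_lin_zeros e1 e2 e3 (p ^ n2) ->
  z2 \in frob_lin_zeros c1 c2 c3 (p ^ n1) :&: frob_lin_zeros e1 e2 e3 (p ^ n2) ->
  #|frob_lin_zeros c1 c2 c3 (p ^ n1) :&: frob_lin_zeros e1 e2 e3 (p ^ n2)| =
  #|[set s : F | s ^+ (p ^ gcdn n1 n2) == s]|.
Proof.
move=> n1_gt0 c2_neq0 e2_neq0 z12 /setIP[z1Z1 z1Z2] /setIP[z2Z1 z2Z2].
pose w := z2 - z1; have w_neq0 : w != 0 by rewrite subr_eq0 eq_sym.
have w_ker1 : frob_lin c1 c2 (p ^ n1) w = 0.
  by apply/eqP; rewrite -(frob_lin_zeros_shift _ z1Z1) addrC subrK.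
have w_ker2 : frob_lin e1 e2 (p ^ n2) w = 0.
  by apply/eqP; rewrite -(frob_lin_zeros_shift _ z1Z2) addrC subrK.
have affine_inj : injective (fun s => z1 + w * s) by move=> s t /addrI/(mulfI w_neq0).
rewrite -(card_preimset _ affine_inj); apply: eq_card => s.
rewrite [RHS]inE [LHS]inE in_setI (frob_lin_zeros_shift _ z1Z1).
rewrite (frob_lin_zeros_shift _ z1Z2) !frob_lin_kernelM //.
apply/andP/eqP => [[/eqP fix1 /eqP fix2] | fixg]; first exact: fixed_expr_gcd.
by rewrite !(fixed_expr_dvd _ fixg) ?dvdn_gcdl ?dvdn_gcdr.
Qed.

Lemma card_frob_quad_common_roots (b1 a1 c1 d1 b2 a2 c2 d2 x0 : F) (n1 n2 : nat) :
  b1 != 0 ->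
  frob_quad b1 a1 c1 d1 (p ^ n1) x0 = 0 -> frob_quad b2 a2 c2 d2 (p ^ n2) x0 = 0 ->
  #|[set x | (frob_quad b1 a1 c1 d1 (p ^ n1) x == 0)
             && (frob_quad b2 a2 c2 d2 (p ^ n2) x == 0)]| =
  #|frob_lin_zeros (b1 * x0 ^+ (p ^ n1) + c1) (b1 * x0 + a1) b1 (p ^ n1)
    :&: frob_lin_zeros (b2 * x0 ^+ (p ^ n2) + c2) (b2 * x0 + a2) b2 (p ^ n2)|.+1.
Proof.
move=> b1_neq0 root1 root2.
(* 0^-1 = 0, so z |-> x0 + z^-1 is a bijection of F sending 0 to x0. *)
have inv_shift_inj : injective (fun z : F => x0 + z^-1) by move=> y z /addrI/invr_inj.
rewrite -(card_preimset _ inv_shift_inj); set Z := _ :&: _.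
have zero_notin : 0 \notin Z.
  have Q_gt0 : (0 < p ^ n1)%N by rewrite expn_gt0 prime_gt0 ?(pcharf_prime charFp).
  apply/setIP => -[+ _]; rewrite inE /frob_lin expr0n gtn_eqF //= mulr0n !mulr0 !add0r.
  by rewrite (negbTE b1_neq0).
transitivity #|0 |: Z|; last by rewrite cardsU1 zero_notin.
apply: eq_card => z; rewrite !inE; have [->|z_neq0] := eqVneq z 0.
  by rewrite invr0 addr0 root1 root2 eqxx.
by rewrite !frob_quad_shiftV.
Qed.

End CommonZeros.

Lemma sol_setE (F : finFieldType) (p k q : nat) (a b : F) :
  sol_set p k q a b =
  [set x | (frob_quad 1 0 0 (-1) q x == 0)
           && (frob_quad b a (a ^+ q) (b ^+ q) (p ^ k) x == 0)].
Proof. by apply/setP => x; rewrite !inE /frob_quad mul1r !mul0r !addr0 subr_eq0. Qed.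

Theorem lemma2p5 (p m k : nat) (F : finFieldType) (a b : F) :
  prime p -> (0 < m)%N -> (0 < k)%N ->
  #|F| = ((p ^ m) ^ 2)%N ->
  (a, b) != (0, 0) ->
  #|sol_set p k (p ^ m) a b| \in [:: 0%N; 1%N; 2%N; (p ^ gcdn k m).+1].
Proof.
move=> p_pr m_gt0 k_gt0 cardF ab_neq0.
have cardF2 : #|F| = (p ^ (m * 2))%N by rewrite cardF expnM.
have charFp : p \in [pchar F] by apply: card_finPcharP cardF2 p_pr.
case: (set_0Vmem (sol_set p k (p ^ m) a b)) => [-> | [x0]]; first by rewrite cards0.
rewrite !sol_setE inE => /andP[/eqP circle_x0 /eqP root_x0].
rewrite (card_frob_quad_common_roots charFp (oner_neq0 F) circle_x0 root_x0).
set Z := _ :&: _.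
have [|/card_gt1P[z1 [z2 [z1Z z2Z z12]]]] := leqP #|Z| 1; first by case: #|Z| => [|[]].
have x0_neq0 : x0 != 0.
  apply: contra_eq_neq circle_x0 => ->.
  by rewrite /frob_quad addn1 exprS !mul0r mulr0 !add0r oppr_eq0 oner_eq0.
have coef_neq0 : b * x0 + a != 0.
  apply: contraNneq ab_neq0 => coef0; move: z1Z z2Z; rewrite /Z coef0.
  move=> /setIP[_ z1Z] /setIP[_ z2Z]; have b0 := frob_lin_zeros_const charFp z12 z1Z z2Z.
  by move: coef0; rewrite b0 mul0r add0r => ->.
rewrite (card_frob_lin_common_zeros charFp _ _ _ z12 z1Z z2Z) ?mul1r ?addr0 //.
rewrite (card_frob_fixed p_pr cardF2) ?gcdn_gt0 ?m_gt0 ?dvdn_mulr ?dvdn_gcdl //.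
by rewrite [gcdn m k]gcdnC !inE eqxx !orbT.
Qed.
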